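(* Let $\mathcal N=(\mathcal S,\mathcal C,\mathcal R)$ be a chemical reaction network and let $\tilde{\mathcal N}=(\mathcal S,\tilde{\mathcal C},\mathcal{CR}_K,\tilde{\mathcal R})$ be a weakly resolvable improper translation of $\mathcal N$. Let $\{y_{p_j}-y_{q_j}\}_{j=1}^{\tilde s}$ be a basis of the kinetic-order subspace $\tilde S$ of $\tilde{\mathcal N}$ chosen among the vectors $y_p-y_q$ with $p,q\in\mathcal{CR}_K$ and $h_2(p),h_2(q)$ in the same linkage class of $\tilde{\mathcal N}$. Then for every improper reaction $\mathcal R_i\in\mathcal R_I$ there exist real constants $c_1,\dots,c_{\tilde s}$ such that for all $\mathbf x\in\mathbb R^m_{>0}$ $$\mathbf x^{y_{\rho(i)}}=\tilde K_{\rho(i),\rho(i)_K}(\mathbf x)\;\mathbf x^{y_{\rho(i)_K}},\qquad \tilde K_{\rho(i),\rho(i)_K}(\mathbf x)=\prod_{j=1}^{\tilde s}\left(\frac{\mathbf x^{y_{p_j}}}{\mathbf x^{y_{q_j}}}\right)^{c_j}.$$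
   Context: A chemical reaction network $\mathcal N=(\mathcal S,\mathcal C,\mathcal R)$ consists of species $\mathcal A_1,\dots,\mathcal A_m$, pairwise distinct complexes $\mathcal C_1,\dots,\mathcal C_n$ with stoichiometric vectors $y_1,\dots,y_n\in\mathbb Z^m_{\ge 0}$, and reactions $\mathcal R_1,\dots,\mathcal R_r$, where $\mathcal R_i$ is $\mathcal C_{\rho(i)}\to\mathcal C_{\rho'(i)}$ with $\rho(i)\neq\rho'(i)$; every species appears in some complex and every complex in some reaction. Complexes and reactions are identified with their indices; $\mathcal{CR}=\{\rho(i)\}$ is the reactant complex set; $\mathbf x^{y}=\prod_j x_j^{y_j}$. Linkage classes are the connected components of the underlying undirected reaction graph (vertices complexes, edges reactions); a network is weakly reversible if for every reaction $\mathcal C_a\to\mathcal C_b$ there is a directed path of reactions from $\mathcal C_b$ to $\mathcal C_a$. A translation of $\mathcal N$ is a tuple $\tilde{\mathcal N}=(\mathcal S,\tilde{\mathcal C},\mathcal{CR}_K,\tilde{\mathcal R})$, where $(\mathcal S,\tilde{\mathcal C},\tilde{\mathcal R})$ is a chemical reaction network with complexes $\tilde{\mathcal C}_j$ (vectors $\tilde y_j$), reactions $\tilde{\mathcal R}_l:\tilde{\mathcal C}_{\tilde\rho(l)}\to\tilde{\mathcal C}_{\tilde\rho'(l)}$ and reactant complex set $\tilde{\mathcal{CR}}$, and $\mathcal{CR}_K\subseteq\mathcal{CR}$, such that: (1) there is a bijection $h_1:\mathcal R\to\tilde{\mathcal R}$ with $\tilde y_{\tilde\rho'(h_1(i))}-\tilde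 y_{\tilde\rho(h_1(i))}=y_{\rho'(i)}-y_{\rho(i)}$ for all $i$; (2) there is a surjection $h_2:\mathcal{CR}\to\tilde{\mathcal{CR}}$ with $h_2(\rho(i))=\tilde\rho(h_1(i))$; (3) for each $j\in\tilde{\mathcal{CR}}$, $\mathcal{CR}_K$ contains exactly one element of $h_2^{-1}(j)$, denoted $\kappa(j)$ (the kinetic complex of $\tilde{\mathcal C}_j$); non-reactant complexes of $\tilde{\mathcal N}$ receive kinetic complexes $\kappa(j)\in\mathcal{CR}_K$ arbitrarily. The translation is proper if $h_2$ is injective, improper otherwise, and strong if $\tilde{\mathcal N}$ is weakly reversible. The kinetic-order subspace is $\tilde S=\mathrm{span}\{y_{\kappa(\tilde\rho'(l))}-y_{\kappa(\tilde\rho(l))}:\tilde{\mathcal R}_l\in\tilde{\mathcal R}\}$. A reaction $\mathcal R_i$ is improper if $\rho(i)\in\mathcal{CR}\setminus\mathcal{CR}_K$; $\mathcal R_I$ denotes the set of improper reactions. For any reaction, $\rho(i)_K$ denotes the unique element of $h_2^{-1}(h_2(\rho(i)))\cap\mathcal{CR}_K$ (the kinetically relevant complex). The improper kinetic subspace is $\tilde S_I=\mathrm{span}\{y_{\rho(i)}-y_{\rho(i)_K}: i\in\mathcal R_I\}$. An improper translation is weakly resolvable if it is strong and $\tilde S_I\subseteq\tilde S$. *)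

From HB Require Import structures.
From mathcomp Require Import all_boot all_order all_algebra.
From mathcomp Require Import reals exp.
Set Implicit Arguments. Unset Strict Implicit. Unset Printing Implicit Defensive.
Import Order.TTheory GRing.Theory Num.Theory.
Local Open Scope ring_scope.

(* A network with m species, n complexes (stoichiometric vectors y a : 'I_m -> nat)
   and r reactions rho i -> rho' i. *)

Definition reactants (n r : nat) (rho : 'I_r -> 'I_n) : {set 'I_n} :=
  [set rho i | i : 'I_r].

Definition is_crn (m n r : nat) (y : 'I_n -> 'I_m -> nat) (rho rho' : 'I_r -> 'I_n) : Prop :=
  [/\ (forall a b, (forall k, y a k = y b k) -> a = b),
      (forall i, rho i != rho' i),
      (forall k, exists a, y a k != 0%N)
    & (forall a, exists i, rho i = a \/ rho' i = a)].

Definition reac_rel (n r : nat) (rho rho' : 'I_r -> 'I_n) : rel 'I_n :=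
  fun a b => [exists l, (rho l == a) && (rho' l == b)].

Definition weakly_reversible (n r : nat) (rho rho' : 'I_r -> 'I_n) : Prop :=
  forall l, connect (reac_rel rho rho') (rho' l) (rho l).

Definition same_linkage (n r : nat) (rho rho' : 'I_r -> 'I_n) (a b : 'I_n) : bool :=
  connect (fun u v => reac_rel rho rho' u v || reac_rel rho rho' v u) a b.

(* (S, Ct, CRK, Rt) is a translation of (S, C, R), with bijection h1, map h2
   (only its values on CR matter) and kinetic complex assignment kappa. *)
Definition is_translation (m n r : nat) (y : 'I_n -> 'I_m -> nat) (rho rho' : 'I_r -> 'I_n)
  (nt rt : nat) (yt : 'I_nt -> 'I_m -> nat) (rhot rhot' : 'I_rt -> 'I_nt)
  (CRK : {set 'I_n}) (h1 : 'I_r -> 'I_rt) (h2 : 'I_n -> 'I_nt) (kappa : 'I_nt -> 'I_n) : Prop :=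
  [/\ is_crn y rho rho', is_crn yt rhot rhot',
      CRK \subset reactants rho,
      bijective h1
    & (forall i k, (yt (rhot' (h1 i)) k)%:Z - (yt (rhot (h1 i)) k)%:Z
                   = (y (rho' i) k)%:Z - (y (rho i) k)%:Z)] /\
  [/\ (forall i, h2 (rho i) = rhot (h1 i)),
      (forall j, j \in reactants rhot -> exists2 a, a \in reactants rho & h2 a = j),
      (forall j, j \in reactants rhot -> #|[set a in CRK | h2 a == j]| = 1%N),
      (forall j, kappa j \in CRK)
    & (forall j, j \in reactants rhot -> h2 (kappa j) = j)].

Definition improper_translation (n r nt : nat) (rho : 'I_r -> 'I_n) (h2 : 'I_n -> 'I_nt) : Prop :=
  exists a b, [/\ a \in reactants rho, b \in reactants rho, a != b & h2 a = h2 b].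

Definition vec (R : realType) (m n : nat) (y : 'I_n -> 'I_m -> nat) (a : 'I_n) : 'rV[R]_m :=
  \row_k (y a k)%:R.

Definition kinetic_subspace (R : realType) (m n : nat) (y : 'I_n -> 'I_m -> nat)
  (nt rt : nat) (rhot rhot' : 'I_rt -> 'I_nt) (kappa : 'I_nt -> 'I_n) : {vspace 'rV[R]_m} :=
  <<[seq vec R y (kappa (rhot' l)) - vec R y (kappa (rhot l)) | l : 'I_rt]>>%VS.

Definition rhoK (n r nt : nat) (rho : 'I_r -> 'I_n) (h2 : 'I_n -> 'I_nt)
  (kappa : 'I_nt -> 'I_n) (i : 'I_r) : 'I_n := kappa (h2 (rho i)).

Definition improper_kinetic_subspace (R : realType) (m n r : nat) (y : 'I_n -> 'I_m -> nat)
  (rho : 'I_r -> 'I_n) (nt : nat) (CRK : {set 'I_n}) (h2 : 'I_n -> 'I_nt)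
  (kappa : 'I_nt -> 'I_n) : {vspace 'rV[R]_m} :=
  <<[seq vec R y (rho i) - vec R y (rhoK rho h2 kappa i)
     | i <- enum [pred i : 'I_r | rho i \notin CRK]]>>%VS.

Definition weakly_resolvable (R : realType) (m n r : nat) (y : 'I_n -> 'I_m -> nat)
  (rho : 'I_r -> 'I_n) (nt rt : nat) (rhot rhot' : 'I_rt -> 'I_nt)
  (CRK : {set 'I_n}) (h2 : 'I_n -> 'I_nt) (kappa : 'I_nt -> 'I_n) : Prop :=
  [/\ improper_translation rho h2,
      weakly_reversible rhot rhot'
    & (improper_kinetic_subspace R y rho CRK h2 kappa
        <= kinetic_subspace R y rhot rhot' kappa)%VS].

Definition monomial (R : realType) (m : nat) (x : 'I_m -> R) (v : 'I_m -> nat) : R :=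
  \prod_(k < m) x k ^+ v k.

From HB Require Import structures.
From mathcomp Require Import all_boot all_order all_algebra.
From mathcomp Require Import reals sequences exp.
Import Order.TTheory GRing.Theory Num.Theory.
Local Open Scope ring_scope.

(* The improper reaction vector y_rho(i) - y_rho(i)_K lies in S~_I, hence in S~,
   hence is a real combination sum_j c_j (y_pj - y_qj) of the chosen basis.
   Writing monomials as exponentials of linear forms in ln x turns this linear
   identity into the claimed multiplicative one, with the c_j as exponents. *)

Lemma monomial_expR (R : realType) (m : nat) (x : 'I_m -> R) (a : 'I_m -> nat) :
  (forall k, 0 < x k) -> monomial x a = expR (\sum_k (a k)%:R * ln (x k)).
Proof.
move=> x_gt0; rewrite /monomial expR_sum; apply: eq_bigr => k _.
by rewrite expRM_natl lnK // posrE.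
Qed.

Lemma memv_span_coef {K : fieldType} {vT : vectType K} {s : nat} (F : 'I_s -> vT) v :
  v \in <<[seq F j | j : 'I_s]>>%VS -> exists c : 'I_s -> K, v = \sum_j c j *: F j.
Proof.
move=> v_span; exists (fun j => coord [tuple F j | j < s] j v).
rewrite {1}(@coord_span _ _ _ [tuple F j | j < s] v v_span).
by apply: eq_bigr => j _; rewrite -tnth_nth tnth_mktuple.
Qed.

Lemma monomial_ratio_powR (R : realType) (m s : nat) (u w : 'I_m -> nat)
    (a b : 'I_s -> 'I_m -> nat) (c : 'I_s -> R) (x : 'I_m -> R) :
  (forall k, 0 < x k) ->
  (forall k, (u k)%:R - (w k)%:R = \sum_j c j * ((a j k)%:R - (b j k)%:R) :> R) ->
  monomial x u = (\prod_(j < s) powR (monomial x (a j) / monomial x (b j)) (c j))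
                 * monomial x w.
Proof.
move=> x_gt0 uw_comb.
have u_comb k : (u k)%:R = (w k)%:R + \sum_j c j * ((a j k)%:R - (b j k)%:R) :> R.
  by rewrite -uw_comb addrC subrK.
under eq_bigr => j _ do rewrite !monomial_expR // -expRB -expRM.
rewrite !monomial_expR // -expR_sum -expRD; congr expR.
under eq_bigr => k _ do rewrite u_comb mulrDl big_distrl /=.
rewrite big_split /= addrC; congr (_ + _).
rewrite exchange_big /=; apply: eq_bigr => j _.
rewrite [RHS]mulrC mulrBr !big_distrr -sumrB /=; apply: eq_bigr => k _.
by rewrite -mulrBr -mulrBl mulrA.
Qed.

Lemma improper_reaction_vec_in_kinetic_subspace {R : realType} {m n r : nat}
    {y : 'I_n -> 'I_m -> nat} {rho : 'I_r -> 'I_n} {nt rt : nat}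
    {rhot rhot' : 'I_rt -> 'I_nt} {CRK : {set 'I_n}} {h2 : 'I_n -> 'I_nt}
    {kappa : 'I_nt -> 'I_n} {i : 'I_r} :
  weakly_resolvable R y rho rhot rhot' CRK h2 kappa -> rho i \notin CRK ->
  vec R y (rho i) - vec R y (rhoK rho h2 kappa i)
    \in kinetic_subspace R y rhot rhot' kappa.
Proof.
move=> [_ _ SI_sub_S] i_improper; apply: (subvP SI_sub_S).
by apply: memv_span; apply/mapP; exists i; rewrite // mem_enum inE.
Qed.

Theorem lemma4p2 (R : realType) (m n r : nat) (y : 'I_n -> 'I_m -> nat)
  (rho rho' : 'I_r -> 'I_n) (nt rt : nat) (yt : 'I_nt -> 'I_m -> nat)
  (rhot rhot' : 'I_rt -> 'I_nt) (CRK : {set 'I_n}) (h1 : 'I_r -> 'I_rt)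
  (h2 : 'I_n -> 'I_nt) (kappa : 'I_nt -> 'I_n) (s : nat) (p q : 'I_s -> 'I_n) :
  is_translation y rho rho' yt rhot rhot' CRK h1 h2 kappa ->
  weakly_resolvable R y rho rhot rhot' CRK h2 kappa ->
  (forall j, [/\ p j \in CRK, q j \in CRK & same_linkage rhot rhot' (h2 (p j)) (h2 (q j))]) ->
  basis_of (kinetic_subspace R y rhot rhot' kappa) [seq vec R y (p j) - vec R y (q j) | j : 'I_s] ->
  forall i : 'I_r, rho i \notin CRK ->
  exists c : 'I_s -> R, forall x : 'I_m -> R, (forall k, 0 < x k) ->
    monomial x (y (rho i)) =
      (\prod_(j < s) powR (monomial x (y (p j)) / monomial x (y (q j))) (c j))
      * monomial x (y (rhoK rho h2 kappa i)).
Proof.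
move=> _ resolvable _ pq_basis i i_improper.
have := improper_reaction_vec_in_kinetic_subspace resolvable i_improper.
rewrite -(span_basis pq_basis).
move=> /(memv_span_coef (fun j => vec R y (p j) - vec R y (q j)))[c vec_comb].
exists c => x x_gt0; apply: monomial_ratio_powR => // k.
have := congr1 (fun v : 'rV[R]_m => v 0 k) vec_comb.
rewrite /= summxE !mxE => ->; apply: eq_bigr => j _.
by rewrite /vec !mxE.
Qed.
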